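(* We may fix a basis for $\mathcal{M}_k^j(\rho)$ such that $G$ is of standard form, i.e. $G=\Omega_j\,\mathrm{diag}\{\omega_1,\dots,\omega_k\}$ (equivalently, up to a permutation, $G$ has the $k$ distinct eigenvalues $\Omega_j\omega_r$, $r=1,\dots,k$, each of multiplicity one).
   Context: Non-singular monad matrices are $(A,B,C,D)$ with $A\in GL(k,\mathbb{C})$, $B\in Mat_{k\times k}(\mathbb{C})$, $C\in Mat_{k\times 2}(\mathbb{C})$, $D\in Mat_{2\times k}(\mathbb{C})$, satisfying $[A,B]+CD=0$ and the full-rank conditions, up to $(A,B,C,D)\sim(hAh^{-1},hBh^{-1},hC,Dh^{-1})$; $C_p$, $D_p$ denote the $p$-th column of $C$ and row of $D$. Fix $j\in\mathbb{Z}_{2k}$ even and $\omega\in(-\pi,\pi)$. $\mathcal{M}_k^j(\rho)$ is the set of such matrices for which there is $g\in GL(k,\mathbb{C})$ with $e^{\imath\frac{j\pi}{k}}A=gAg^{-1}$, $e^{\imath\frac{\pi}{k}}B=g(B-C_1D_1A^{-1})g^{-1}$, $e^{\imath\frac{\pi}{2k}}e^{\imath\frac{j\pi}{4k}}C_1=e^{\imath\omega}gC_2$, $e^{\imath\frac{\pi}{2k}}e^{\imath\frac{3j\pi}{4k}}C_2=e^{-\imath\omega}gAC_1$, $e^{\imath\frac{\pi}{2k}}e^{\imath\frac{3j\pi}{4k}}D_1=e^{-\imath\omega}D_2g^{-1}$, $e^{\imath\frac{\pi}{2k}}e^{\imath\frac{j\pi}{4k}}D_2=e^{\imath\omega}D_1A^{-1}g^{-1}$.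 $G=e^{-\imath\frac{j\pi}{2k}}g^2A$, which satisfies $e^{\imath\frac{2j\pi}{k}}A=GAG^{-1}$, $e^{\imath\frac{2\pi}{k}}B=GBG^{-1}$, $e^{\imath\frac{\pi}{k}}C=GC\,\mathrm{adj}(\sigma_{2j\pi/k})$, $e^{\imath\frac{\pi}{k}}D=\sigma_{2j\pi/k}DG^{-1}$ with $\sigma_\varphi=\mathrm{diag}(e^{-\imath\frac{3\varphi}{4}},e^{-\imath\frac{\varphi}{4}})$, $\mathrm{adj}(\sigma)=\det(\sigma)\sigma^{-1}$. Notation: $\Omega_j=e^{\imath\frac{(2-j)\pi}{2k}}$, $\omega_r=e^{\imath\frac{2\pi r}{k}}$. *)

From HB Require Import structures.
From mathcomp Require Import all_boot all_order all_algebra.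
From mathcomp Require Import complex.
From mathcomp Require Import reals trigo.
Set Implicit Arguments. Unset Strict Implicit. Unset Printing Implicit Defensive.
Import Order.TTheory GRing.Theory Num.Theory.
Local Open Scope ring_scope.
Local Open Scope complex_scope.

Definition expi (R : realType) (t : R) : R[i] := (cos t) +i* (sin t).

(* Non-singular monad matrices: A invertible, [A,B]+CD = 0, and for all
   (x,y) in C^* x C the map (A-x ; B-y ; D) : C^k -> C^{2k+2} is injective
   and the map (-(B-y), A-x, C) : C^{2k+2} -> C^k is surjective. *)
Definition nonsingular_monad (R : realType) (k : nat)
  (A B : 'M[R[i]]_k) (C : 'M[R[i]]_(k, 2)) (D : 'M[R[i]]_(2, k)) : Prop :=
  [/\ A \in unitmx,
      A *m B - B *m A + C *m D = 0 &
      forall x y : R[i], x != 0 ->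
        \rank (col_mx (col_mx (A - x%:M) (B - y%:M)) D) = k /\
        \rank (row_mx (row_mx (- (B - y%:M)) (A - x%:M)) C) = k ].

From HB Require Import structures.
From mathcomp Require Import all_boot all_order all_algebra.
From mathcomp Require Import complex.
From mathcomp Require Import reals trigo.
From mathcomp Require Import ring lra zify.
Set Implicit Arguments.
Unset Strict Implicit.
Unset Printing Implicit Defensive.

Import Order.TTheory GRing.Theory Num.Theory.

(* Write the candidate eigenvalues of G as om * nu ^+ p (p mod k), with nu a primitive k-th
   root of unity.  The defining relations of the monad say that A, B and g^-1 shift the left
   eigenspaces of G along this orbit by 2m, 1 and m steps (j = 2m), that the rows of D are left
   eigenvectors at indices 1 + m and 1, and that the columns of C are right eigenvectors at
   indices -m and -2m.  If some index were missing from the spectrum, measure for every index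
   the distance to the next missing one, and let S be the sum of the eigenspaces whose distance
   is at most that of index 1.  Then S contains D and is stable under A and B, so the
   injectivity condition forces S to be everything.  But the distance is m-periodic, so the
   columns of C sit at indices as far from a gap as index 0, one step further than index 1:
   S annihilates C, hence C = 0, contradicting surjectivity.  Thus G has the k distinct
   eigenvalues om * nu ^+ p and is diagonal in a basis of eigenvectors. *)

Section RunLength.
Variables (k : nat) (T : pred nat).
Hypotheses (k_gt0 : (0 < k)%N) (T_periodic : forall p, T (p + k) = T p).
Variable p0 : nat.
Hypothesis T_p0 : ~~ T p0.

Lemma periodic_addMn n p : T (p + n * k) = T p.
Proof. by elim: n => [|n IHn]; rewrite ?addn0 // mulSnr addnA T_periodic. Qed.

Lemma periodic_mod p : T (p %% k) = T p.
Proof. by rewrite {2}(divn_eq p k) addnC periodic_addMn. Qed.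

Lemma exists_run_end p : exists l, ~~ T (p + l).
Proof.
exists (p0 + p * k.-1); rewrite addnCA -mulnS prednK //.
by rewrite periodic_addMn.
Qed.

Definition run_length p := ex_minn (exists_run_end p).

Lemma run_lengthP p : ~~ T (p + run_length p).
Proof. by rewrite /run_length; case: ex_minnP. Qed.

Lemma run_length_min p l : (l < run_length p)%N -> T (p + l).
Proof.
rewrite /run_length; case: ex_minnP => n _ n_min l_lt.
by apply/negPn/negP => /n_min; rewrite leqNgt l_lt.
Qed.

Lemma run_length_eq p l :
  ~~ T (p + l) -> (forall l', (l' < l)%N -> T (p + l')) -> run_length p = l.
Proof.
move=> notT_l T_lt; apply/eqP; rewrite eqn_leq.
rewrite /run_length; case: ex_minnP => n notT_n n_min.
rewrite n_min //= leqNgt; apply/negP => /T_lt.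
by rewrite (negPf notT_n).
Qed.

Lemma eq_run_length p q :
  (forall l, T (p + l) = T (q + l)) -> run_length p = run_length q.
Proof.
move=> eqT; apply: run_length_eq; first by rewrite eqT run_lengthP.
by move=> l /run_length_min; rewrite eqT.
Qed.

Lemma run_length_mod p : run_length (p %% k) = run_length p.
Proof. by apply: eq_run_length => l; rewrite -periodic_mod modnDml periodic_mod. Qed.

Lemma run_lengthS p : T p -> run_length p = (run_length p.+1).+1.
Proof.
move=> Tp; apply: run_length_eq => [|[|l] l_lt]; rewrite ?addn0 //.
  by rewrite addnS -addSn run_lengthP.
by rewrite addnS -addSn run_length_min.
Qed.

End RunLength.

Local Open Scope ring_scope.

Lemma ord2P (i : 'I_2) : i = 0 \/ i = 1.
Proof. by case: i => [[|[|i]] //] i_lt; [left | right]; apply: val_inj. Qed.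

Lemma mul_col_row2 {R : pzRingType} m n (C : 'M[R]_(m, 2)) (D : 'M[R]_(2, n)) :
  C *m D = col 0 C *m row 0 D + col 1 C *m row 1 D.
Proof.
apply/matrixP => i l; rewrite !mxE !big_ord1 big_ord_recl big_ord1 !mxE.
by have -> : lift ord0 ord0 = 1 :> 'I_2 by apply: val_inj.
Qed.

Lemma mulmx_col_eq0 {R : pzRingType} m n p (E : 'M[R]_(m, n)) (C : 'M[R]_(n, p)) :
  (forall j, E *m col j C = 0) -> E *m C = 0.
Proof.
move=> EC0; apply/matrixP => a j.
transitivity ((E *m col j C) a 0); last by rewrite EC0 !mxE.
by rewrite !mxE; apply: eq_bigr => i _; rewrite mxE.
Qed.

Section Eigenspaces.
Variables (F : fieldType) (n : nat) (G : 'M[F]_n).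

Lemma eigenvalue_unit_neq0 (M : 'M[F]_n) (v : 'rV_n) x :
  M \in unitmx -> v != 0 -> v *m M = x *: v -> x != 0.
Proof.
move=> M_unit v_neq0 vM; apply: contra v_neq0 => /eqP x0.
by rewrite -(mulmxK M_unit v) vM x0 scale0r mul0mx.
Qed.

Lemma eigenspace_mul_sub (M : 'M[F]_n) s l :
  M *m G = s *: (G *m M) -> (eigenspace G l *m M <= eigenspace G (s * l))%MS.
Proof.
move=> MG; apply/eigenspaceP.
have /eigenspaceP EG : (eigenspace G l <= eigenspace G l)%MS := submx_refl _.
by rewrite -mulmxA MG -scalemxAr mulmxA EG -scalemxAl scalerA.
Qed.

Lemma mulmx_shift_inv (M : 'M[F]_n) s :
  M \in unitmx -> s != 0 -> M *m G = s *: (G *m M) ->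
  invmx M *m G = s^-1 *: (G *m invmx M).
Proof.
move=> M_unit s_neq0 MG; have := congr1 (fun X => invmx M *m X *m invmx M) MG.
by rewrite /= mulKmx // -scalemxAr -scalemxAl -mulmxA mulmxK // => ->; rewrite scalerK.
Qed.

Lemma eigenvalue_mul (M : 'M[F]_n) s l :
  M \in unitmx -> s != 0 -> M *m G = s *: (G *m M) ->
  eigenvalue G (s * l) = eigenvalue G l.
Proof.
have shift (N : 'M[F]_n) t a : N \in unitmx -> N *m G = t *: (G *m N) ->
    eigenvalue G a -> eigenvalue G (t * a).
  move=> N_unit NG /eigenvalueP [v vG v_neq0]; apply/eigenvalueP; exists (v *m N).
    by rewrite -mulmxA NG -scalemxAr mulmxA vG -scalemxAl scalerA.
  by rewrite mulmx_free_eq0 ?row_free_unit.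
move=> M_unit s_neq0 MG; apply/idP/idP; last exact: shift _ _ _ M_unit MG.
move/(shift _ _ _ _ (mulmx_shift_inv M_unit s_neq0 MG)); rewrite mulKf //.
by apply; rewrite unitmx_inv.
Qed.

Lemma eigenspace_mul_eigenvector_eq0 (c : 'cV[F]_n) l l' :
  G *m c = l' *: c -> l != l' -> eigenspace G l *m c = 0.
Proof.
move=> Gc l_neq; have /eigenspaceP EG : (eigenspace G l <= eigenspace G l)%MS := submx_refl _.
have : (l - l') *: (eigenspace G l *m c) = 0.
  by rewrite scalerBl scalemxAl -EG -mulmxA Gc -scalemxAr subrr.
by move/eqP; rewrite scaler_eq0 subr_eq0 (negPf l_neq) => /eqP.
Qed.

Lemma diagonalize_distinct_eigenvalues (lam : 'I_n -> F) :
  injective lam -> (forall r, eigenvalue G (lam r)) ->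
  exists2 h, h \in unitmx & h *m G *m invmx h = diag_mx (\row_r lam r).
Proof.
move=> lam_inj lam_eig; pose E r := eigenspace G (lam r).
have E_neq0 r : E r != 0 := lam_eig r.
pose h := \matrix_r nz_row (E r).
have h_diag : h *m G = diag_mx (\row_r lam r) *m h.
  apply/row_matrixP => r; rewrite row_mul rowK mul_diag_mx.
  have /eigenspaceP -> : (nz_row (E r) <= E r)%MS := nz_row_sub _.
  by apply/rowP => c; rewrite !mxE.
have rank_sum_E : \rank (\sum_r E r) = (\sum_r \rank (E r))%N.
  by apply/mxdirectP/mxdirect_sum_eigenspace => r s _ _ /lam_inj.
have rank_E r : \rank (E r) = 1%N.
  have rank_ge1 i : (1 <= \rank (E i))%N by rewrite lt0n mxrank_eq0.
  have : (\sum_(i < n | i != r) 1 <= \sum_(i < n | i != r) \rank (E i))%N.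
    by apply: leq_sum => i _.
  have := rank_leq_col (\sum_r E r)%MS.
  rewrite rank_sum_E (bigD1 r) //= sum1_card cardC1 card_ord.
  move: (rank_ge1 r) (ltn_ord r).
  by move: (\rank (E r)) (\sum_(i < n | i != r) \rank (E i)) => a b; lia.
have E_sub r : (E r <= h)%MS.
  have r1 : \rank (nz_row (E r)) = 1%N by rewrite rank_rV nz_row_eq0 E_neq0.
  have E_nz_row : (E r <= nz_row (E r))%MS.
    by rewrite -(mxrank_leqif_sup (nz_row_sub _)).2 r1 rank_E.
  by apply: submx_trans E_nz_row _; rewrite -(rowK (fun r => nz_row (E r)) r) row_sub.
have h_unit : h \in unitmx.
  rewrite -row_full_unit /row_full eqn_leq rank_leq_col /=.
  rewrite -{1}(card_ord n) -sum1_card (eq_bigr _ (fun r _ => esym (rank_E r))).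
  rewrite -rank_sum_E mxrankS //; exact/sumsmx_subP.
by exists h; rewrite // h_diag mulmxK.
Qed.

End Eigenspaces.

Lemma common_eigenvector_in {F : numClosedFieldType} n (P Q W : 'M[F]_n) :
  W != 0 -> stablemx W P -> stablemx W Q -> W *m (P *m Q) = W *m (Q *m P) ->
  exists x y (v : 'rV_n),
    [/\ v != 0, (v <= W)%MS, v *m P = x *: v & v *m Q = y *: v].
Proof.
move=> W_neq0 WP WQ W_comm.
have rank_gt0 : (0 < \rank W)%N by rewrite lt0n mxrank_eq0.
have base_comm : row_base W *m (P *m Q) = row_base W *m (Q *m P).
  have /submxP [X ->] : (row_base W <= W)%MS by rewrite eq_row_base.
  by rewrite -!mulmxA W_comm.
have [|v0 v0_neq0 /andP [v0P v0Q]] :=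
  @common_eigenvector2 _ _ (restrictmx W P) (restrictmx W Q) rank_gt0.
  by rewrite -!conjmxM ?inE ?stablemx_row_base // /conjmx base_comm.
pose v := v0 *m row_base W.
have /eigenvectorP [x /eigenspaceP vP] : stablemx v P by rewrite -stablemx_restrict.
have /eigenvectorP [y /eigenspaceP vQ] : stablemx v Q by rewrite -stablemx_restrict.
exists x, y, v; split => //.
  by rewrite mulmx_free_eq0 ?row_base_free.
by rewrite (submx_trans (submxMl _ _)) // eq_row_base.
Qed.

Lemma monad_commutator {R : pzRingType} n (A B : 'M[R]_n) (C : 'M[R]_(n, 2)) D :
  A *m B - B *m A + C *m D = 0 -> B *m A - A *m B = C *m D.
Proof. by move=> monad_eq; rewrite -[LHS]addr0 -monad_eq addrA -opprB addNr add0r. Qed.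

Section NonsingularMonad.
Variables (F : numClosedFieldType) (k : nat).
Variables (A B : 'M[F]_k) (C : 'M[F]_(k, 2)) (D : 'M[F]_(2, k)).
Hypothesis A_unit : A \in unitmx.
Hypothesis monad_eq : A *m B - B *m A + C *m D = 0.
Hypothesis monad_inj : forall x y : F, x != 0 ->
  \rank (col_mx (col_mx (A - x%:M) (B - y%:M)) D) = k.
Hypothesis monad_surj : forall x y : F, x != 0 ->
  \rank (row_mx (row_mx (- (B - y%:M)) (A - x%:M)) C) = k.

Lemma monad_stable_full (S : 'M[F]_k) :
  (D <= S)%MS -> stablemx S A -> stablemx S B -> row_full S.
Proof.
move=> DS SA SB; apply/negPn/negP => S_not_full.
pose W := kermx S^T.
have W_neq0 : W != 0.
  rewrite -mxrank_eq0 mxrank_ker mxrank_tr; move: S_not_full (rank_leq_col S).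
  by rewrite /row_full; lia.
have WS : W *m S^T = 0 := mulmx_ker _.
have W_stable X : stablemx S X -> stablemx W X^T.
  by case/submxP => Y SX; rewrite sub_kermx -mulmxA -trmx_mul SX trmx_mul mulmxA WS mul0mx.
have WD : W *m D^T = 0 by case/submxP: DS => Y ->; rewrite trmx_mul mulmxA WS mul0mx.
have W_comm : W *m (A^T *m B^T) = W *m (B^T *m A^T).
  rewrite -!trmx_mul.
  have -> : A *m B = B *m A - C *m D by rewrite -(monad_commutator monad_eq) opprB addrC subrK.
  by rewrite linearB /= [(C *m D)^T]trmx_mul mulmxBr mulmxA WD mul0mx subr0.
have [x [y [v [v_neq0 vW vA vB]]]] :=
  common_eigenvector_in W_neq0 (W_stable _ SA) (W_stable _ SB) W_comm.
have x_neq0 : x != 0 by apply: eigenvalue_unit_neq0 v_neq0 vA; rewrite unitmx_tr.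
have vD : v *m D^T = 0 by case/submxP: vW => Z ->; rewrite -mulmxA WD mulmx0.
have : v *m (col_mx (col_mx (A - x%:M) (B - y%:M)) D)^T = 0.
  rewrite !tr_col_mx !mul_mx_row vD !linearB /= !tr_scalar_mx vA vB.
  by rewrite !mul_mx_scalar !subrr !row_mx0.
by move/eqP; rewrite mulmx_free_eq0 ?(negPf v_neq0) // /row_free mxrank_tr monad_inj.
Qed.

Lemma monad_C_neq0 : (0 < k)%N -> C != 0.
Proof.
move=> k_gt0; apply/negP => /eqP C0.
have AB_comm : 1%:M *m (A *m B) = 1%:M *m (B *m A).
  apply/eqP; rewrite !mul1mx -subr_eq0 -opprB (monad_commutator monad_eq).
  by rewrite C0 mul0mx oppr0.
have one_neq0 : (1%:M : 'M[F]_k) != 0 by rewrite -mxrank_eq0 mxrank1 -lt0n.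
have [x [y [v [v_neq0 _ vA vB]]]] :=
  common_eigenvector_in one_neq0 (submx1 _) (submx1 _) AB_comm.
have x_neq0 : x != 0 := eigenvalue_unit_neq0 A_unit v_neq0 vA.
have : v *m row_mx (row_mx (- (B - y%:M)) (A - x%:M)) C = 0.
  rewrite !mul_mx_row C0 mulmx0 mulmxN !mulmxBr vA vB !mul_mx_scalar !subrr.
  by rewrite oppr0 !row_mx0.
by move/eqP; rewrite mulmx_free_eq0 ?(negPf v_neq0) // /row_free monad_surj.
Qed.

Section ShiftedSpectrum.
Variables (m : nat) (G P : 'M[F]_k) (om nu : F).
Hypotheses (k_gt0 : (0 < k)%N) (nu_k : nu ^+ k = 1) (P_unit : P \in unitmx).
Hypothesis A_shift : A *m G = nu ^+ (m * 2)%N *: (G *m A).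
Hypothesis B_shift : B *m G = nu *: (G *m B).
Hypothesis P_shift : P *m G = nu ^+ m *: (G *m P).
Hypothesis D0_eigen : row 0 D *m G = (om * nu ^+ m.+1) *: row 0 D.
Hypothesis D1_eigen : row 1 D *m G = (om * nu) *: row 1 D.
Hypothesis C0_eigen : G *m col 0 C = (om / nu ^+ m) *: col 0 C.
Hypothesis C1_eigen : G *m col 1 C = (om / nu ^+ (m * 2)%N) *: col 1 C.

Local Notation mu p := (om * nu ^+ p).
Let eig : pred nat := fun p => eigenvalue G (mu p).

Lemma nu_neq0 : nu != 0.
Proof.
apply/negP => /eqP nu0; move: nu_k; rewrite nu0 expr0n (gtn_eqF k_gt0) => /eqP.
by rewrite eq_sym oner_eq0.
Qed.

Lemma mu_addn p l : mu (p + l)%N = nu ^+ l * mu p.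
Proof. by rewrite exprD mulrA mulrC. Qed.

Lemma mu_mod p : mu (p %% k) = mu p.
Proof. by rewrite {2}(divn_eq p k) addnC mu_addn mulnC exprM nu_k expr1n mul1r. Qed.

Lemma eig_periodic p : eig (p + k)%N = eig p.
Proof. by rewrite /eig mu_addn nu_k mul1r. Qed.

Lemma eig_addm p : eig (p + m)%N = eig p.
Proof. by rewrite /eig mu_addn (eigenvalue_mul _ P_unit _ P_shift) // expf_neq0 // nu_neq0. Qed.

Lemma eig_addmMn p n : eig (p + m * n)%N = eig p.
Proof.
elim: n => [|n IHn]; first by rewrite muln0 addn0.
by rewrite mulnSr addnA eig_addm.
Qed.

Lemma eig_eq_mu p q l : mu p = mu q -> eig (p + l)%N = eig (q + l)%N.
Proof. by move=> e; rewrite /eig !mu_addn e. Qed.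

Section NotAllEigenvalues.
Variable p0 : nat.
Hypothesis eig_p0 : ~~ eig p0.

Let run := run_length k_gt0 eig_periodic eig_p0.

Lemma run_eq_mu p q : mu p = mu q -> run p = run q.
Proof. by move=> e; apply: eq_run_length => l; apply: eig_eq_mu. Qed.

Lemma run_addmMn p n : run (p + m * n)%N = run p.
Proof. by apply: eq_run_length => l; rewrite addnAC eig_addmMn. Qed.

Lemma run_lt_of_mu_eq p n : eig p -> mu (p + m * n)%N = mu 0%N -> (run 1 < run p)%N.
Proof.
move=> Tp mu_eq; have eig0 : eig 0%N by rewrite -[0%N]addn0 -(eig_eq_mu 0 mu_eq) addn0 eig_addmMn.
by rewrite -(run_addmMn p n) (run_eq_mu mu_eq) /run (run_lengthS _ _ _ eig0).
Qed.

Let S := (\sum_(i < k | (run i <= run 1)%N) eigenspace G (mu i))%MS.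

Lemma eigenspace_sub_S p : (run p <= run 1)%N -> (eigenspace G (mu p) <= S)%MS.
Proof.
move=> run_p; rewrite -mu_mod.
apply: (sumsmx_sup (Ordinal (ltn_pmod p k_gt0))); last exact: submx_refl.
by rewrite /= /run run_length_mod.
Qed.

Lemma D_sub_S : (D <= S)%MS.
Proof.
apply/row_subP => i; case: (ord2P i) => ->.
  apply: submx_trans (eigenspace_sub_S (p := (1 + m * 1)%N) _); last by rewrite run_addmMn.
  by apply/eigenspaceP; rewrite D0_eigen muln1 add1n.
by apply: submx_trans (eigenspace_sub_S (leqnn _)); apply/eigenspaceP; rewrite D1_eigen.
Qed.

Lemma S_stable_A : stablemx S A.
Proof.
rewrite sumsmxMr; apply/sumsmx_subP => i run_i.
apply: submx_trans (eigenspace_mul_sub _ A_shift) _.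
by rewrite -mu_addn; apply: eigenspace_sub_S; rewrite run_addmMn.
Qed.

Lemma S_stable_B : stablemx S B.
Proof.
rewrite sumsmxMr; apply/sumsmx_subP => i run_i.
case: (boolP (eig i)) => [eig_i | /negbNE/eqP ->]; last by rewrite mul0mx sub0mx.
apply: submx_trans (eigenspace_mul_sub _ B_shift) _.
rewrite -[nu]expr1 -mu_addn addn1; apply: eigenspace_sub_S.
by apply: leq_trans run_i; rewrite /run (run_lengthS _ _ _ eig_i).
Qed.

Lemma S_mul_C : S *m C = 0.
Proof.
apply/eqP; rewrite -submx0 sumsmxMr_gen; apply/sumsmx_subP => i run_i.
rewrite genmxE submx0.
case: (boolP (eig i)) => [eig_i | /negbNE/eqP ->]; last by rewrite mul0mx.
have mu_neq n : mu i != om / nu ^+ (m * n)%N.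
  apply: contraTneq run_i => mu_i; rewrite -ltnNge; apply: (run_lt_of_mu_eq (n := n) eig_i).
  by rewrite mu_addn mu_i mulrC divfK ?expf_neq0 ?nu_neq0 // mulr1.
apply/eqP/mulmx_col_eq0 => j; case: (ord2P j) => ->.
  by apply: eigenspace_mul_eigenvector_eq0 C0_eigen _; rewrite -[m]muln1 mu_neq.
exact: eigenspace_mul_eigenvector_eq0 C1_eigen (mu_neq 2%N).
Qed.

Lemma missing_eigenvalue_absurd : False.
Proof.
have /submxP [Y Y_S] : (1%:M <= S)%MS.
  by rewrite sub1mx monad_stable_full ?D_sub_S ?S_stable_A ?S_stable_B.
have : C = 0 by rewrite -[C]mul1mx Y_S -mulmxA S_mul_C mulmx0.
by apply/eqP; rewrite monad_C_neq0.
Qed.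

End NotAllEigenvalues.

Lemma eigenvalue_orbit p : eigenvalue G (om * nu ^+ p).
Proof. by case: (boolP (eig p)) => // /missing_eigenvalue_absurd. Qed.

End ShiftedSpectrum.

End NonsingularMonad.

(* [z], [b] and [u] stand for e^{i pi/4k}, e^{i j pi/4k} and e^{i omega}. *)
Section MonadSymmetry.
Variables (F : fieldType) (k : nat).
Variables (A B g G : 'M[F]_k) (C : 'M[F]_(k, 2)) (D : 'M[F]_(2, k)) (z b u : F).
Hypotheses (z_neq0 : z != 0) (b_neq0 : b != 0) (u_neq0 : u != 0).
Hypotheses (A_unit : A \in unitmx) (g_unit : g \in unitmx).
Hypothesis monad_eq : A *m B - B *m A + C *m D = 0.
Hypothesis gAg : b ^+ 4 *: A = g *m A *m invmx g.
Hypothesis gBg : z ^+ 4 *: B = g *m (B - col 0 C *m row 0 D *m invmx A) *m invmx g.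
Hypothesis gC1 : (z ^+ 2 * b) *: col 0 C = u *: (g *m col 1 C).
Hypothesis gAC0 : (z ^+ 2 * b ^+ 3) *: col 1 C = u^-1 *: (g *m A *m col 0 C).
Hypothesis D1g : (z ^+ 2 * b ^+ 3) *: row 0 D = u^-1 *: (row 1 D *m invmx g).
Hypothesis D0Ag : (z ^+ 2 * b) *: row 1 D = u *: (row 0 D *m invmx A *m invmx g).

Hypothesis G_def : G = (b ^+ 2)^-1 *: (g *m g *m A).

Let b4_neq0 : b ^+ 4 != 0 := expf_neq0 4 b_neq0.

Lemma gA_comm : g *m A = b ^+ 4 *: (A *m g).
Proof. by rewrite scalemxAl gAg mulmxKV. Qed.

Lemma Ag_comm : A *m g = (b ^+ 4)^-1 *: (g *m A).
Proof. by rewrite gA_comm scalerK ?b4_neq0. Qed.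

Lemma g_col1 : g *m col 1 C = (u^-1 * (z ^+ 2 * b)) *: col 0 C.
Proof. by rewrite -scalerA gC1 scalerK. Qed.

Lemma gA_col0 : g *m A *m col 0 C = (u * (z ^+ 2 * b ^+ 3)) *: col 1 C.
Proof. by rewrite -scalerA gAC0 scalerA mulfV // scale1r. Qed.

Lemma row1_ginv : row 1 D *m invmx g = (u * (z ^+ 2 * b ^+ 3)) *: row 0 D.
Proof. by rewrite -scalerA D1g scalerA mulfV // scale1r. Qed.

Lemma row0_Ainv_ginv :
  row 0 D *m invmx A *m invmx g = (u^-1 * (z ^+ 2 * b)) *: row 1 D.
Proof. by rewrite -scalerA D0Ag scalerK. Qed.

Lemma g_col0 : g *m col 0 C = (u * (z ^+ 2 * b ^+ 3) / b ^+ 4) *: (invmx A *m col 1 C).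
Proof.
rewrite -[g *m _](mulKmx A_unit) (mulmxA A) -[A *m g](scalerK b4_neq0) -gA_comm.
by rewrite -scalemxAl gA_col0 -!scalemxAr scalerA mulrC.
Qed.

Lemma conj_Ainv : g *m invmx A *m invmx g = (b ^+ 4)^-1 *: invmx A.
Proof.
have bA_unit : b ^+ 4 *: A \in unitmx by rewrite unitmxZ ?unitfE ?b4_neq0.
have bA_inv : (b ^+ 4 *: A) *m (g *m invmx A *m invmx g) = 1%:M.
  by rewrite gAg !mulmxA mulmxKV // mulmxK // mulmxV.
by rewrite -[LHS](mulKmx bA_unit) bA_inv mulmx1 invmxZ.
Qed.

Lemma conj_B :
  g *m B *m invmx g = z ^+ 4 *: B + z ^+ 4 *: (invmx A *m col 1 C *m row 1 D).
Proof.
have -> : g *m B *m invmx g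
    = z ^+ 4 *: B + (g *m col 0 C) *m (row 0 D *m invmx A *m invmx g).
  by rewrite gBg mulmxBr mulmxBl !mulmxA subrK.
rewrite g_col0 row0_Ainv_ginv -scalemxAl -scalemxAr scalerA; congr (_ + _ *: _).
by field; rewrite ?z_neq0 ?b_neq0 ?u_neq0.
Qed.

Lemma conj2_B :
  g *m g *m B *m invmx g *m invmx g = z ^+ 8 *: (B + invmx A *m (C *m D)).
Proof.
have -> : g *m g *m B *m invmx g *m invmx g = g *m (g *m B *m invmx g) *m invmx g.
  by rewrite !mulmxA.
rewrite conj_B mulmxDr mulmxDl.
rewrite -!scalemxAr -!scalemxAl conj_B.
have -> : g *m (invmx A *m col 1 C *m row 1 D) *m invmx g
    = (g *m invmx A *m invmx g) *m (g *m col 1 C) *m (row 1 D *m invmx g).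
  by rewrite !mulmxA mulmxKV.
rewrite conj_Ainv g_col1 row1_ginv -!scalemxAl -!scalemxAr !scalerA.
rewrite mul_col_row2 mulmxDr !mulmxA !scalerDr !scalerA -scalemxAl scalerA -exprD.
have -> : z ^+ 4 / b ^+ 4 * (u * (z ^+ 2 * b ^+ 3)) * (u^-1 * (z ^+ 2 * b)) = z ^+ 8.
  by field; rewrite ?z_neq0 ?b_neq0 ?u_neq0.
by rewrite addrAC -addrA.
Qed.

Lemma Ag2_comm : A *m g *m g = (b ^+ 8)^-1 *: (g *m g *m A).
Proof.
rewrite Ag_comm -scalemxAl -mulmxA Ag_comm -scalemxAr scalerA mulmxA -invfM -exprD.
by [].
Qed.

Lemma g2B : g *m g *m B = z ^+ 8 *: (invmx A *m B *m A *m g *m g).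
Proof.
have -> : g *m g *m B = (g *m g *m B *m invmx g *m invmx g) *m g *m g.
  by rewrite !mulmxKV.
rewrite conj2_B -(monad_commutator monad_eq) mulmxBr mulKmx // mulmxA addrC subrK.
by rewrite -!scalemxAl.
Qed.

Lemma A_G : A *m G = (b ^+ 8)^-1 *: (G *m A).
Proof.
rewrite G_def.
rewrite -scalemxAr -scalemxAl scalerA mulrC -scalerA; congr (_ *: _).
by rewrite !mulmxA Ag2_comm -scalemxAl.
Qed.

Lemma B_G : B *m G = (z ^+ 8)^-1 *: (G *m B).
Proof.
have ggA : g *m g *m A = b ^+ 8 *: (A *m g *m g) by rewrite Ag2_comm scalerKV ?expf_neq0.
have AggB : A *m g *m g *m B = z ^+ 8 *: (B *m (A *m g *m g)).
  by rewrite -!mulmxA (mulmxA g) g2B -scalemxAr !mulmxA mulmxV // mul1mx.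
rewrite G_def ggA -!scalemxAl -!scalemxAr AggB !scalerA; congr (_ *: _).
by field; rewrite ?z_neq0 ?b_neq0 ?u_neq0.
Qed.

Lemma g_G : g *m G = b ^+ 4 *: (G *m g).
Proof.
rewrite G_def.
rewrite -scalemxAr -scalemxAl scalerA mulrC -scalerA; congr (_ *: _).
by rewrite !mulmxA -mulmxA gA_comm -scalemxAr !mulmxA.
Qed.

Lemma row0_G : row 0 D *m G = (z ^+ 4 * b ^+ 6)^-1 *: row 0 D.
Proof.
have D0_inv : row 0 D *m invmx A *m invmx g *m invmx g = (z ^+ 4 * b ^+ 4) *: row 0 D.
  rewrite row0_Ainv_ginv -scalemxAl row1_ginv scalerA; congr (_ *: _).
  by field; rewrite ?z_neq0 ?b_neq0 ?u_neq0.
have := congr1 (mulmx^~ (g *m g *m A)) D0_inv.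
rewrite /= !mulmxA !mulmxKV // -!scalemxAl => D0_eq.
rewrite G_def -scalemxAr !mulmxA [X in _ = _ *: X]D0_eq scalerA; congr (_ *: _).
by field; rewrite ?z_neq0 ?b_neq0 ?u_neq0.
Qed.

Lemma row1_G : row 1 D *m G = (z ^+ 4 * b ^+ 2)^-1 *: row 1 D.
Proof.
have D1_eq : row 1 D = (u * (z ^+ 2 * b ^+ 3)) *: (row 0 D *m g).
  by rewrite scalemxAl -row1_ginv mulmxKV.
rewrite [in LHS]D1_eq -scalemxAl -mulmxA g_G -scalemxAr mulmxA row0_G -scalemxAl.
rewrite [in RHS]D1_eq !scalerA; congr (_ *: _).
by field; rewrite ?z_neq0 ?b_neq0 ?u_neq0.
Qed.

Lemma G_col0 : G *m col 0 C = (z ^+ 4 * b ^+ 2) *: col 0 C.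
Proof.
rewrite G_def -scalemxAl -!mulmxA (mulmxA g A) gA_col0 -scalemxAr g_col1 !scalerA.
by congr (_ *: _); field; rewrite ?z_neq0 ?b_neq0 ?u_neq0.
Qed.

Lemma G_col1 : G *m col 1 C = (z ^+ 4 * b ^+ 6) *: col 1 C.
Proof.
apply: (can_inj (mulKmx g_unit)); rewrite mulmxA g_G -scalemxAl.
rewrite -mulmxA g_col1.
rewrite -!scalemxAr G_col0 g_col1 !scalerA.
by congr (_ *: _); field; rewrite ?z_neq0 ?b_neq0 ?u_neq0.
Qed.

End MonadSymmetry.

Lemma prim_root_exprS_inj {R : nzRingType} n (z : R) :
  n.-primitive_root z -> injective (fun r : 'I_n => z ^+ r.+1).
Proof.
move=> z_prim r s /eqP; rewrite (eq_prim_root_expr z_prim) -[r.+1]addn1 -[s.+1]addn1.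
by rewrite eqn_modDr !modn_small ?ltn_ord // => /eqP/val_inj.
Qed.

Lemma unity_root_exprV {F : fieldType} n (z : F) i :
  z ^+ n = 1 -> (i <= n)%N -> z ^+ i = z^-1 ^+ (n - i).
Proof. by move=> zn1 i_le; rewrite exprVn; apply/esym/mulr1_eq; rewrite -exprD subnK. Qed.

Theorem monad_symmetry_standard_form (F : numClosedFieldType) (k m : nat)
    (A B g : 'M[F]_k) (C : 'M[F]_(k, 2)) (D : 'M[F]_(2, k)) (z b u : F) :
  k.-primitive_root (z ^+ 8) -> b ^+ 4 = z ^+ 8 ^+ m -> u != 0 ->
  A \in unitmx -> A *m B - B *m A + C *m D = 0 ->
  (forall x y : F, x != 0 ->
     \rank (col_mx (col_mx (A - x%:M) (B - y%:M)) D) = k /\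
     \rank (row_mx (row_mx (- (B - y%:M)) (A - x%:M)) C) = k) ->
  g \in unitmx ->
  b ^+ 4 *: A = g *m A *m invmx g ->
  z ^+ 4 *: B = g *m (B - col 0 C *m row 0 D *m invmx A) *m invmx g ->
  (z ^+ 2 * b) *: col 0 C = u *: (g *m col 1 C) ->
  (z ^+ 2 * b ^+ 3) *: col 1 C = u^-1 *: (g *m A *m col 0 C) ->
  (z ^+ 2 * b ^+ 3) *: row 0 D = u^-1 *: (row 1 D *m invmx g) ->
  (z ^+ 2 * b) *: row 1 D = u *: (row 0 D *m invmx A *m invmx g) ->
  exists2 h, h \in unitmx &
    h *m ((b ^+ 2)^-1 *: (g *m g *m A)) *m invmx h
      = (z ^+ 4 / b ^+ 2) *: diag_mx (\row_(r < k) z ^+ 8 ^+ r.+1).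
Proof.
move=> zeta_prim b4 u_neq0 A_unit monad_eq monad_rank g_unit gAg gBg gC1 gAC0 D1g D0Ag.
set G := _ *: _; have G_def : G = (b ^+ 2)^-1 *: (g *m g *m A) by [].
have k_gt0 := prim_order_gt0 zeta_prim; have zeta_k := prim_expr_order zeta_prim.
have z_neq0 : z != 0.
  apply: contra_eq_neq zeta_k => ->.
  by rewrite -exprM expr0n muln_eq0 (gtn_eqF k_gt0) eq_sym oner_eq0.
have b_neq0 : b != 0 by apply: contra_eq_neq b4 => ->; rewrite expr0n eq_sym !expf_neq0.
pose om := z ^+ 4 / b ^+ 2; pose nu := (z ^+ 8)^-1.
have nu_m : nu ^+ m = (b ^+ 4)^-1 by rewrite exprVn b4.
have orbit p : eigenvalue G (om * nu ^+ p).
  apply: (@eigenvalue_orbit _ _ _ _ _ _ A_unit monad_eq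
    (fun x y x_neq0 => (monad_rank x y x_neq0).1)
    (fun x y x_neq0 => (monad_rank x y x_neq0).2) m G (invmx g)).
  - exact: k_gt0.
  - by rewrite exprVn zeta_k invr1.
  - by rewrite unitmx_inv.
  - by rewrite exprM nu_m exprVn -exprM (A_G b_neq0 g_unit gAg G_def).
  - exact: B_G z_neq0 b_neq0 u_neq0 A_unit g_unit monad_eq gAg gBg gC1 gAC0 D1g D0Ag
      G_def.
  - by rewrite nu_m (mulmx_shift_inv g_unit _ (g_G g_unit gAg G_def)) ?expf_neq0.
  - rewrite (row0_G z_neq0 b_neq0 u_neq0 A_unit g_unit D1g D0Ag G_def).
    by congr (_ *: _); rewrite [nu ^+ _]exprS nu_m /om /nu; field; rewrite z_neq0 b_neq0.
  - rewrite (row1_G z_neq0 b_neq0 u_neq0 A_unit g_unit gAg D1g D0Ag G_def).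
    by congr (_ *: _); rewrite /om /nu; field; rewrite z_neq0 b_neq0.
  - rewrite (G_col0 b_neq0 u_neq0 gC1 gAC0 G_def).
    by congr (_ *: _); rewrite nu_m /om; field; rewrite b_neq0.
  - rewrite (G_col1 b_neq0 u_neq0 g_unit gAg gC1 gAC0 G_def).
    by congr (_ *: _); rewrite exprM nu_m /om; field; rewrite b_neq0.
have om_neq0 : om != 0 by rewrite mulf_neq0 ?invr_eq0 ?expf_neq0.
have [|r|h h_unit hG] := @diagonalize_distinct_eigenvalues _ _ G (fun r => om * z ^+ 8 ^+ r.+1).
- by move=> r s /(mulfI om_neq0) /(prim_root_exprS_inj zeta_prim).
- by rewrite (unity_root_exprV zeta_k (ltn_ord r)); exact: orbit.
exists h => //; rewrite hG.
by apply/matrixP => i j; rewrite !mxE mulrnAr /om.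
Qed.

Local Open Scope complex_scope.

Section Expi.
Variable R : realType.
Implicit Types s t : R.

Lemma expiD s t : expi (s + t) = expi s * expi t.
Proof. by rewrite /expi cosD sinD; simpc; congr (_ +i* _); ring. Qed.

Lemma expi_neq0 t : expi t != 0.
Proof.
apply/negP => /eqP e; have := expiD t (- t).
by rewrite addrN e mul0r /expi cos0 sin0 => /eqP; rewrite oner_eq0.
Qed.

Lemma expiN t : expi (- t) = (expi t)^-1.
Proof.
apply: (mulfI (expi_neq0 t)); rewrite -expiD addrN mulfV ?expi_neq0 //.
by rewrite /expi cos0 sin0.
Qed.

Lemma expiMn n t : expi (n%:R * t) = expi t ^+ n.
Proof.
elim: n => [|n IHn]; first by rewrite mul0r /expi cos0 sin0.
by rewrite -addn1 natrD mulrDl mul1r expiD IHn exprD.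
Qed.

Lemma expi_neq1 t : 0 < t < pi *+ 2 -> expi t != 1.
Proof.
case/andP => t_gt0 t_lt; apply/negP => /eqP e.
have sin_t : sin t = 0 by have := congr1 (@complex.Im R) e.
have pi_gt0 : 0 < pi :> R := pi_gt0 R.
case: (ltrgtP t pi) => [t_ltpi | t_gtpi | t_pi].
- have : 0 < sin t by apply: sin_gt0_pi; rewrite t_gt0 t_ltpi.
  by rewrite sin_t ltxx.
- have : 0 < sin (t - pi) by apply: sin_gt0_pi; rewrite subr_gt0 t_gtpi /=; lra.
  by rewrite sinB cospi sinpi sin_t; lra.
- by have := congr1 (@complex.Re R) e; rewrite /expi /= t_pi cospi; lra.
Qed.

Lemma prim_root_expi k : (0 < k)%N -> k.-primitive_root (expi (2 * pi / k%:R) : R[i]).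
Proof.
move=> k_gt0; have kR : k%:R != 0 :> R by rewrite pnatr_eq0 -lt0n.
apply/andP; split => //; apply/forallP => i; rewrite unity_rootE -expiMn.
case: (ltngtP i.+1 k) => [i_lt | i_gt | i_eq].
- rewrite (negPf (expi_neq1 _)) //.
  have q_gt0 : 0 < i.+1%:R / k%:R :> R by rewrite divr_gt0 ?ltr0n.
  have q_lt1 : i.+1%:R / k%:R < 1 :> R by rewrite ltr_pdivrMr ?ltr0n // mul1r ltr_nat.
  rewrite (_ : _ * _ = i.+1%:R / k%:R * (pi *+ 2)); last by rewrite mulr2n; field.
  by move: (pi_gt0 R) => pi_gt0; apply/andP; split; nra.
- by move: i_gt; rewrite ltnNge ltn_ord.
rewrite i_eq (_ : _ * _ = pi *+ 2); last by rewrite mulr2n; field.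
by rewrite /expi cos2pi sin2pi eqxx.
Qed.

End Expi.

Theorem mainTheorem10 (R : realType) (k j : nat) (w : R)
  (A B : 'M[R[i]]_k) (C : 'M[R[i]]_(k, 2)) (D : 'M[R[i]]_(2, k))
  (g : 'M[R[i]]_k) :
  (j < 2 * k)%N -> ~~ odd j ->
  - pi < w < pi ->
  nonsingular_monad A B C D ->
  g \in unitmx ->
  expi (j%:R * pi / k%:R) *: A = g *m A *m invmx g ->
  expi (pi / k%:R) *: B
    = g *m (B - col 0 C *m row 0 D *m invmx A) *m invmx g ->
  expi (pi / (2 * k%:R)) * expi (j%:R * pi / (4 * k%:R)) *: col 0 C
    = expi w *: (g *m col 1 C) ->
  expi (pi / (2 * k%:R)) * expi (3 * j%:R * pi / (4 * k%:R)) *: col 1 C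
    = expi (- w) *: (g *m A *m col 0 C) ->
  expi (pi / (2 * k%:R)) * expi (3 * j%:R * pi / (4 * k%:R)) *: row 0 D
    = expi (- w) *: (row 1 D *m invmx g) ->
  expi (pi / (2 * k%:R)) * expi (j%:R * pi / (4 * k%:R)) *: row 1 D
    = expi w *: (row 0 D *m invmx A *m invmx g) ->
  let G := expi (- (j%:R * pi / (2 * k%:R))) *: (g *m g *m A) in
  exists h : 'M[R[i]]_k, h \in unitmx /\
    h *m G *m invmx h
      = expi ((2 - j%:R) * pi / (2 * k%:R))
        *: diag_mx (\row_(r < k) expi (2 * pi * (r.+1)%:R / k%:R)).
Proof.
move=> j_lt j_even _ [A_unit monad_eq monad_rank] g_unit gAg gBg gC1 gAC0 D1g D0Ag G.
have k_gt0 : (0 < k)%N by lia.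
have kR : k%:R != 0 :> R by rewrite pnatr_eq0 -lt0n.
pose z := expi (pi / (4 * k%:R)) : R[i].
have z_pow n x : x = n%:R * (pi / (4 * k%:R)) -> expi x = z ^+ n by move=> ->; rewrite expiMn.
have z_powM a c x : x = (a * c)%N%:R * (pi / (4 * k%:R)) -> expi x = z ^+ a ^+ c.
  by rewrite -exprM; apply: z_pow.
have e1 : expi (pi / k%:R) = z ^+ 4 by apply: z_pow; field.
have e2 : expi (pi / (2 * k%:R)) = z ^+ 2 by apply: z_pow; field.
have e3 : expi (j%:R * pi / (4 * k%:R)) = z ^+ j by apply: z_pow; field.
have e4 : expi (j%:R * pi / k%:R) = z ^+ j ^+ 4 by apply: z_powM; rewrite natrM; field.
have e5 : expi (3 * j%:R * pi / (4 * k%:R)) = z ^+ j ^+ 3 by apply: z_powM; rewrite natrM; field.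
have e6 : expi (- (j%:R * pi / (2 * k%:R))) = (z ^+ j ^+ 2)^-1.
  by rewrite expiN (z_powM j 2%N) // natrM; field.
have e7 : expi ((2 - j%:R) * pi / (2 * k%:R)) = z ^+ 4 / z ^+ j ^+ 2.
  by rewrite -e6 -e1 -expiD; congr expi; field.
have e8 (r : 'I_k) : expi (2 * pi * r.+1%:R / k%:R) = z ^+ 8 ^+ r.+1.
  by apply: z_powM; rewrite natrM; field.
have zeta_prim : k.-primitive_root (z ^+ 8).
  by rewrite -(z_pow 8%N (2 * pi / k%:R)) ?prim_root_expi //; field.
have j_eq : j = (j./2).*2 by rewrite -{1}(odd_double_half j) (negbTE j_even).
have b4 : z ^+ j ^+ 4 = z ^+ 8 ^+ j./2 by rewrite -!exprM {1}j_eq; congr (_ ^+ _); lia.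
rewrite e4 in gAg; rewrite e1 in gBg; rewrite e2 e3 in gC1 D0Ag; rewrite e2 e5 expiN in gAC0 D1g.
have [h h_unit hG] := monad_symmetry_standard_form zeta_prim b4 (expi_neq0 w) A_unit
  monad_eq monad_rank g_unit gAg gBg gC1 gAC0 D1g D0Ag.
exists h; split => //; rewrite /G e6 e7 hG; congr (_ *: diag_mx _).
by apply/rowP => r; rewrite !mxE e8.
Qed.
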